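(* For every $n\geq 2$, if $T$ is the caterpillar tree on a leaf set $X$ with $|X|=n$, then there exist strictly positive edge lengths for $T$ such that the ranking $\pi_T$ is strict and reversible with respect to $X'=\{x\}$, where $x=\arg\min_{x'\in X}FP_T(x')$ is the leaf with the lowest Fair Proportion index.
   Context: A rooted binary phylogenetic $X$-tree ($X$ finite, $|X|=n$) is a rooted tree whose root $\rho$ has in-degree 0 and out-degree 2, all edges directed away from $\rho$, all other interior vertices have in-degree 1 and out-degree 2, and whose leaves are bijectively labelled by $X$. Every edge $e$ has a strictly positive length $\lambda_e$. A cherry is a pair of leaves with the same parent; a caterpillar tree is a rooted binary phylogenetic tree with exactly one cherry. The Fair Proportion index of $x\in X$ is $FP_T(x)=\sum_{e\in P(T;\rho,x)}\lambda_e/D_e$, where $P(T;\rho,x)$ is the path from $\rho$ to $x$ and $D_e$ is the number of leaves descended from $e$. For $Y\subseteq X$, the induced subtree $T_Y$ is obtained from the minimal subtree of $T$ connecting $Y$ by suppressing all non-root vertices of in- and out-degree 1, adding the lengths of merged edges; if the root then has out-degree 1, it and its incident edge are deleted. The ranking $\pi_T$ orders $X$ by decreasing $FP_T$; it is strict if all values $FP_T(x)$ are pairwise distinct. For $X'\subset X$, $\widetilde X=X\setminus X'$ and $\widetilde T=T_{\widetilde X}$, a strict ranking $\pi_T$ is reversible with respect to $X'$ if for all distinct $x_i,x_j\in\widetilde X$, $FP_T(x_i)>FP_T(x_j)$ implies $FP_{\widetilde T}(x_i)<FP_{\widetilde T}(x_j)$. *)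

From HB Require Import structures.
From mathcomp Require Import all_boot all_order all_algebra.
From mathcomp Require Import reals.
Set Implicit Arguments. Unset Strict Implicit. Unset Printing Implicit Defensive.
Import Order.TTheory GRing.Theory Num.Theory.
Local Open Scope ring_scope.

(* Rooted binary phylogenetic trees with edge lengths.
   [Node l a r b] is an interior vertex with two children l and r; a (resp. b)
   is the length of the edge from this vertex to l (resp. r).  The root is the
   top-level [Node]; it has no incoming edge. *)
Inductive tree (X : Type) (R : Type) :=
  | Leaf of X
  | Node of tree X R & R & tree X R & R.
Arguments Leaf {X R}.
Arguments Node {X R}.

Section Trees.
Variables (X : eqType) (R : realType).

Fixpoint leaves (t : tree X R) : seq X :=
  match t with
  | Leaf x => [:: x]
  | Node l _ r _ => leaves l ++ leaves r
  end.

Definition labelled_by (t : tree X R) (s : seq X) := perm_eq (leaves t) s.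

Fixpoint pos_lengths (t : tree X R) : Prop :=
  match t with
  | Leaf _ => True
  | Node l a r b => [/\ 0 < a, 0 < b, pos_lengths l & pos_lengths r]
  end.

Fixpoint same_shape (t u : tree X R) : Prop :=
  match t, u with
  | Leaf x, Leaf y => x = y
  | Node l _ r _, Node l' _ r' _ => same_shape l l' /\ same_shape r r'
  | _, _ => False
  end.

Fixpoint cherries (t : tree X R) : nat :=
  match t with
  | Leaf _ => 0
  | Node (Leaf _) _ (Leaf _) _ => 1
  | Node l _ r _ => cherries l + cherries r
  end.

Definition caterpillar (t : tree X R) := cherries t = 1%N.

(* Fair Proportion index: sum over the edges e on the path from the root to x
   of lambda_e / D_e, D_e = number of leaves below e. *)
Fixpoint FP (t : tree X R) (x : X) : R :=
  match t with
  | Leaf _ => 0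
  | Node l a r b =>
      if x \in leaves l then a / (size (leaves l))%:R + FP l x
      else if x \in leaves r then b / (size (leaves r))%:R + FP r x
      else 0
  end.

(* Restriction to the leaves satisfying Y: returns the restricted subtree
   together with the extra length to be added to its incoming edge
   (resulting from suppressing vertices of in- and out-degree 1). *)
Fixpoint restrict (Y : pred X) (t : tree X R) : option (tree X R * R) :=
  match t with
  | Leaf x => if Y x then Some (Leaf x, 0) else None
  | Node l a r b =>
      match restrict Y l, restrict Y r with
      | Some (l', el), Some (r', er) => Some (Node l' (a + el) r' (b + er), 0)
      | Some (l', el), None => Some (l', a + el)
      | None, Some (r', er) => Some (r', b + er)
      | None, None => None
      end
  end.

(* Induced subtree T_Y: at the top the root of out-degree 1 and its edge are
   deleted, i.e. the extra length above the new root is discarded. *)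
Definition induced (Y : pred X) (t : tree X R) : option (tree X R) :=
  omap fst (restrict Y t).

Definition FPo (t : option (tree X R)) (x : X) : R :=
  if t is Some u then FP u x else 0.

Definition strict_ranking (s : seq X) (t : tree X R) :=
  {in s &, forall x y, x != y -> FP t x != FP t y}.

Definition reversible1 (s : seq X) (t : tree X R) (x : X) :=
  strict_ranking s t /\
  {in [seq y <- s | y != x] &, forall xi xj,
      FP t xi > FP t xj ->
      FPo (induced (predC1 x) t) xi < FPo (induced (predC1 x) t) xj}.

End Trees.

From mathcomp Require Import all_boot all_order all_algebra.
From mathcomp Require Import reals.
From mathcomp Require Import ring lra zify.
Set Implicit Arguments. Unset Strict Implicit. Unset Printing Implicit Defensive.
Import Order.TTheory GRing.Theory Num.Theory.
Local Open Scope ring_scope.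

(* A caterpillar with at least three leaves is obtained from a smaller
   caterpillar T by grafting one new leaf y next to its root, with an edge of
   length p to y and an edge of length q to T.  We carry along the induction
   the property [reversible_at T z]: the Fair Proportion index is injective on
   the leaves of T, the leaf z is its strict minimum, and deleting z reverses
   the ranking of the remaining leaves.  For
   the induction step the length q shifts every old leaf upwards by a common
   amount; the length p is chosen so that y becomes the strict maximum of T
   yet, once z has been deleted (which raises the shift on the old leaves, as
   their subtree loses one leaf), the strict minimum of the induced tree. *)

(* If the old leaves have indices of
   absolute value at most B before and after the deletion of z, and the old
   subtree has b.+1 leaves, then the new leaf y lies strictly above every old
   leaf after grafting, and strictly below every remaining old leaf once z is
   deleted (the latter subtree has b leaves and an extra length e >= 0). *)
Lemma graft_lengths (R : realFieldType) (b : nat) (B e : R) :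
  (0 < b)%N -> 0 <= B -> 0 <= e ->
  exists p q, [/\ 0 < p, 0 < q,
    forall v, `|v| <= B -> v + q / b.+1%:R < p &
    forall w, `|w| <= B -> p < w + (q + e) / b%:R].
Proof.
move=> b_gt0 B_ge0 e_ge0; set k := 2 * B + 2.
have b_ge1 : 1 <= b%:R :> R by rewrite ler1n.
have b_neq0 : b%:R != 0 :> R by rewrite pnatr_eq0 -lt0n.
have bS_neq0 : b.+1%:R != 0 :> R by rewrite pnatr_eq0.
have bk_ge0 : 0 <= b%:R * k by apply: mulr_ge0; rewrite /k; lra.
have eb_ge0 : 0 <= e / b%:R by apply: divr_ge0; lra.
exists (b%:R * k + B + 1), (b.+1%:R * (b%:R * k)); split.
- by lra.
- by rewrite !mulr_gt0 ?ltr0Sn ?ltr0n //; rewrite /k; lra.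
- move=> v /ler_normlW v_le.
  by rewrite [_ * (_ * k)]mulrC mulfK //; lra.
- move=> w; rewrite ler_norml => /andP[w_ge _].
  have -> : (b.+1%:R * (b%:R * k) + e) / b%:R = b%:R * k + k + e / b%:R.
    by rewrite -natr1; field.
  by rewrite /k; lra.
Qed.

Lemma seq_norm_bound (R : numDomainType) (I : eqType) (f : I -> R) (s : seq I) :
  exists2 B, 0 <= B & {in s, forall x, `|f x| <= B}.
Proof.
exists (\sum_(x <- s) `|f x|); first exact: sumr_ge0.
by move=> x hx; rewrite (big_rem x hx) /= lerDl sumr_ge0.
Qed.

Section Caterpillars.
Variables (X : eqType) (R : realType).
Implicit Types (t T l r : tree X R) (a b : R) (x y z : X) (p q e : R).

Lemma leaves_nonempty t : (0 < size (leaves t))%N.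
Proof. by elim: t => [//|l IHl a r _ b] /=; rewrite size_cat addn_gt0 IHl. Qed.

Lemma same_shape_leaves t T : same_shape t T -> leaves t = leaves T.
Proof.
elim: t T => [x|l IHl a r IHr b] [y|l' a' r' b'] //=; first by move->.
by case=> /IHl-> /IHr->.
Qed.

Lemma leaves_restrict (Y : pred X) t :
  filter Y (leaves t) =
  if restrict Y t is Some (t', _) then leaves t' else [::].
Proof.
elim: t => [x|l IHl a r IHr b] /=; first by case: (Y x).
rewrite filter_cat IHl IHr.
by case: (restrict Y l) => [[l' el]|]; case: (restrict Y r) => [[r' er]|];
  rewrite ?cats0.
Qed.

Lemma leaves_restrict_Some (Y : pred X) t t' e :
  restrict Y t = Some (t', e) -> leaves t' = filter Y (leaves t).
Proof. by move=> h; rewrite leaves_restrict h. Qed.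

Lemma restrict_ge0 (Y : pred X) t t' e :
  pos_lengths t -> restrict Y t = Some (t', e) -> 0 <= e.
Proof.
elim: t t' e => [x|l IHl a r IHr b] t' e /=; first by case: (Y x) => // _ [_ <-].
case=> ha hb /IHl hl /IHr hr.
case: (restrict Y l) hl => [[l' el]|] hl; case: (restrict Y r) hr => [[r' er]|] hr;
  move=> // [_ <-] //.
- by have := hl _ _ erefl; lra.
- by have := hr _ _ erefl; lra.
Qed.

Definition graft (onleft : bool) y p t q : tree X R :=
  if onleft then Node (Leaf y) p t q else Node t q (Leaf y) p.

Lemma leaves_graft s y p t q : perm_eq (leaves (graft s y p t q)) (y :: leaves t).
Proof. by case: s; rewrite //= -cat1s perm_catC. Qed.

Lemma same_shape_graft s y p t q p' t' q' :
  same_shape t t' -> same_shape (graft s y p t q) (graft s y p' t' q').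
Proof. by case: s. Qed.

Lemma pos_lengths_graft s y p t q :
  0 < p -> 0 < q -> pos_lengths t -> pos_lengths (graft s y p t q).
Proof. by case: s. Qed.

Lemma FP_graft_new s y p t q : y \notin leaves t -> FP (graft s y p t q) y = p.
Proof.
by case: s => /= /negbTE hy; rewrite ?hy inE eqxx divr1 addr0.
Qed.

Lemma FP_graft_old s y p t q x : y \notin leaves t -> x \in leaves t ->
  FP (graft s y p t q) x = q / (size (leaves t))%:R + FP t x.
Proof.
move=> hy hx; case: s => /=; rewrite ?hx // inE.
by case: eqVneq hx hy => [->->|].
Qed.

Lemma restrict_graft s y p t q z t' e : z != y ->
  restrict (predC1 z) t = Some (t', e) ->
  restrict (predC1 z) (graft s y p t q) = Some (graft s y p t' (q + e), 0).
Proof. by move=> hzy; case: s => /= ->; rewrite /= eq_sym hzy addr0. Qed.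

Lemma cherries_gt0 t : (if t is Leaf _ then true else 0 < cherries t)%N.
Proof.
elim: t => [//|l IHl a r IHr b].
case: l IHl => [y|l1 a1 l2 b1] IHl; case: r IHr => [y'|r1 c r2 d] IHr //=;
  exact: leq_trans IHl (leq_addr _ _).
Qed.

Lemma caterpillar_node l a r b : caterpillar (Node l a r b) ->
  [\/ exists y1 y2, l = Leaf y1 /\ r = Leaf y2,
      exists y, l = Leaf y /\ caterpillar r |
      exists y, r = Leaf y /\ caterpillar l].
Proof.
rewrite /caterpillar.
case: l => [y|l1 a1 l2 b1]; case: r => [y'|r1 c r2 d] hc.
- by apply: Or31; exists y, y'.
- by apply: Or32; exists y.
- apply: Or33; exists y'; split=> //.
  by rewrite -[RHS]hc /= addn0.
- have hsum : (cherries (Node l1 a1 l2 b1) + cherries (Node r1 c r2 d) = 1)%N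
    := hc.
  have hl : (0 < cherries (Node l1 a1 l2 b1))%N := cherries_gt0 (Node l1 a1 l2 b1).
  have hr : (0 < cherries (Node r1 c r2 d))%N := cherries_gt0 (Node r1 c r2 d).
  lia.
Qed.

Record reversible_at T z : Prop := ReversibleAt {
  ra_uniq : uniq (leaves T);
  ra_pos : pos_lengths T;
  ra_mem : z \in leaves T;
  ra_inj : {in leaves T &, injective (FP T)};
  ra_min : {in leaves T, forall x, x != z -> FP T z < FP T x};
  ra_rev : exists t' e, restrict (predC1 z) T = Some (t', e) /\
    {in leaves t' &, forall x x', FP T x < FP T x' -> FP t' x' < FP t' x} }.

Lemma reversible_cherry y1 y2 : y1 != y2 ->
  reversible_at (Node (Leaf y1) 2 (Leaf y2) 1) y2.
Proof.
move=> hne; set T := Node _ _ _ _.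
have FP1 : FP T y1 = 2 by rewrite /= inE eqxx divr1 addr0.
have FP2 : FP T y2 = 1 by rewrite /= !inE eq_sym (negbTE hne) eqxx divr1 addr0.
split.
- by rewrite /= inE hne.
- by rewrite /=; split=> //; lra.
- by rewrite !inE eqxx orbT.
- move=> x x'; rewrite !inE => /orP[]/eqP-> /orP[]/eqP->; rewrite // FP1 FP2
    => heq; exfalso; lra.
- move=> x; rewrite !inE => /orP[]/eqP-> hx; last by rewrite eqxx in hx.
  by rewrite FP1 FP2; lra.
- exists (Leaf y1), (2 + 0); split; first by rewrite /= hne eqxx.
  by move=> x x'; rewrite !inE => /eqP-> /eqP->; rewrite ltxx.
Qed.

Lemma reversible_graft T z t' e y s p q :
  reversible_at T z -> restrict (predC1 z) T = Some (t', e) ->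
  y \notin leaves T -> 0 < p -> 0 < q ->
  {in leaves T, forall x, FP T x + q / (size (leaves T))%:R < p} ->
  {in leaves t', forall x, p < FP t' x + (q + e) / (size (leaves t'))%:R} ->
  reversible_at (graft s y p T q) z.
Proof.
case=> huniq hpos hz hinj hmin [t'' [e'' [hres'' hrev]]] hres hy hp hq hmax hlow.
move: hres'' hrev; rewrite hres => -[<- _] hrev.
have mem_graft t0 p0 q0 x :
  (x \in leaves (graft s y p0 t0 q0)) = (x == y) || (x \in leaves t0).
  by rewrite (perm_mem (leaves_graft _ _ _ _ _)) inE.
have hzy : z != y by apply: contraNneq hy => <-.
have t'_sub : {subset leaves t' <= leaves T}.
  by move=> x; rewrite (leaves_restrict_Some hres) mem_filter => /andP[].
have hy' : y \notin leaves t' by apply: contra hy; apply: t'_sub.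
have y_max : {in leaves T, forall x, FP (graft s y p T q) x < FP (graft s y p T q) y}.
  by move=> x hx; rewrite FP_graft_new // FP_graft_old // addrC hmax.
split.
- by rewrite (perm_uniq (leaves_graft _ _ _ _ _)) /= hy huniq.
- exact: pos_lengths_graft.
- by rewrite mem_graft hz orbT.
- move=> x x'; rewrite !mem_graft => /predU1P[->|hx] /predU1P[->|hx'] //.
  + by move=> heq; have := y_max x' hx'; rewrite heq ltxx.
  + by move=> heq; have := y_max x hx; rewrite heq ltxx.
  + by rewrite !FP_graft_old // => /addrI; apply: hinj.
- move=> x; rewrite mem_graft => /predU1P[-> _|hx hxz]; first exact: y_max.
  by rewrite !FP_graft_old // ltrD2l hmin.
- exists (graft s y p t' (q + e)), 0; split; first exact: restrict_graft.
  move=> x x'; rewrite !mem_graft => /predU1P[->|hx] /predU1P[->|hx'].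
  + by rewrite ltxx.
  + by rewrite ltNge ltW // y_max // t'_sub.
  + move=> _; rewrite FP_graft_new // FP_graft_old //.
    by rewrite [_ / _ + _]addrC hlow.
  + rewrite !FP_graft_old ?(t'_sub _ hx) ?(t'_sub _ hx') // !ltrD2l.
    exact: hrev.
Qed.

Lemma reversible_graft_exists T z y : reversible_at T z -> y \notin leaves T ->
  exists p q, [/\ 0 < p, 0 < q & forall s, reversible_at (graft s y p T q) z].
Proof.
move=> hT hy; case: (hT) => huniq hpos hz _ _ [t' [e [hres _]]].
have leaves_t' : leaves t' = rem z (leaves T).
  by rewrite (leaves_restrict_Some hres) rem_filter.
have size_T : size (leaves T) = (size (leaves t')).+1.
  by rewrite leaves_t' size_rem // prednK // (leaves_nonempty T).
have [BT BT_ge0 hBT] := seq_norm_bound (FP T) (leaves T).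
have [Bt Bt_ge0 hBt] := seq_norm_bound (FP t') (leaves t').
have [p [q [hp hq hmax hlow]]] := graft_lengths
  (leaves_nonempty t') (addr_ge0 BT_ge0 Bt_ge0) (restrict_ge0 hpos hres).
exists p, q; split=> // s; apply: reversible_graft hres hy hp hq _ _ => //.
- move=> x hx; rewrite size_T; apply: hmax.
  by have := hBT x hx; lra.
- move=> x hx; apply: hlow.
  by have := hBt x hx; lra.
Qed.

Lemma caterpillar_reversible T0 : caterpillar T0 -> uniq (leaves T0) ->
  exists T z, same_shape T T0 /\ reversible_at T z.
Proof.
have graft_case s y p0 t0 q0 :
    (uniq (leaves t0) -> exists T z, same_shape T t0 /\ reversible_at T z) ->
    uniq (leaves (graft s y p0 t0 q0)) ->
    exists T z, same_shape T (graft s y p0 t0 q0) /\ reversible_at T z.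
  move=> IH; rewrite (perm_uniq (leaves_graft _ _ _ _ _)) /= => /andP[hy hu].
  have [T [z [hsh hT]]] := IH hu.
  rewrite -(same_shape_leaves hsh) in hy.
  have [p [q [_ _ hgraft]]] := reversible_graft_exists hT hy.
  by exists (graft s y p T q), z; split; [apply: same_shape_graft | apply: hgraft].
elim: T0 => [//|l IHl a r IHr b].
case/caterpillar_node => [[y1 [y2 [-> ->]]]|[y [-> hc]]|[y [-> hc]]].
- rewrite /= inE andbT => hne.
  by exists (Node (Leaf y1) 2 (Leaf y2) 1), y2; split=> //; apply: reversible_cherry.
- exact: (graft_case true y a r b (IHr hc)).
- exact: (graft_case false y b l a (IHl hc)).
Qed.

Lemma reversible_at_argmin T z x : reversible_at T z -> x \in leaves T ->
  {in leaves T, forall y, FP T x <= FP T y} -> x = z.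
Proof.
case=> _ _ hz _ hmin _ hx hxmin; apply/eqP; apply: contraT => hxz.
by have := hmin x hx hxz; rewrite ltNge (hxmin z hz).
Qed.

Lemma reversible_at_reversible1 T z (s : seq X) :
  reversible_at T z -> leaves T =i s -> reversible1 s T z.
Proof.
case=> _ _ _ hinj _ [t' [e [hres hrev]]] hs; split.
  move=> x x' hx hx'; apply: contraNneq => heq; apply/eqP.
  by apply: hinj heq; rewrite hs.
have mem_t' : forall x, x \in [seq y <- s | y != z] -> x \in leaves t'.
  by move=> x; rewrite (leaves_restrict_Some hres) !mem_filter hs.
move=> xi xj hi hj hlt; rewrite /induced hres /=.
exact: hrev _ _ (mem_t' _ hj) (mem_t' _ hi) hlt.
Qed.

End Caterpillars.

Theorem corollary1 (R : realType) (n : nat) (X : finType) (T0 : tree X R) :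
  (2 <= n)%N -> #|X| = n ->
  labelled_by T0 (enum X) -> caterpillar T0 ->
  exists T : tree X R,
    [/\ same_shape T T0, pos_lengths T, strict_ranking (enum X) T &
        forall x : X, (forall y : X, FP T x <= FP T y) ->
          reversible1 (enum X) T x].
Proof.
move=> _ _ hlab hcat.
have uniq_T0 : uniq (leaves T0) by rewrite (perm_uniq hlab) enum_uniq.
have [T [z [hsh hT]]] := caterpillar_reversible hcat uniq_T0.
have leaves_T : leaves T =i enum X.
  by move=> x; rewrite (same_shape_leaves hsh) (perm_mem hlab).
have [strict_T _] := reversible_at_reversible1 hT leaves_T.
exists T; split=> // [|x x_min]; first exact: ra_pos hT.
have -> : x = z.
  by apply: reversible_at_argmin hT _ _; rewrite ?leaves_T ?mem_enum.
exact: reversible_at_reversible1 hT leaves_T.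
Qed.
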